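(* Let $0<c<1$ and let $(v^*,u^* )$ be the unique saddle point of $\min_v\max_u E(v,u)$. Define, for $v\in\mathbb{R}^{|S|}$, $u\in\mathbb{R}^{|S|\times|A|}_{>0}$, $$L_c(v,u)=\frac{\alpha}{2}\sum_s|v_s-v^*_s|^2+\tau\Big(\sum_{s,a}\Big(u^*_{sa}\log\frac{u^*_{sa}}{u_{sa}}+u_{sa}-u^*_{sa}\Big)+\frac{c}{1-c}\sum_s\Big(\tilde u^*_s\log\frac{\tilde u^*_s}{\tilde u_s}+\tilde u_s-\tilde u^*_s\Big)\Big).$$ Then $L_c$ is convex, its unique minimum is attained at $(v^*,u^* )$ with $L_c(v^*,u^* )=0$, and the sublevel sets of $L_c$ are bounded.
   Context: Finite MDP: state space $S$, action space $A$, transition probabilities $P_{ass'}$ (with $\sum_{s'}P_{ass'}=1$), rewards $r_{sa}\ge0$, discount $\gamma\in(0,1)$, regularization $\tau>0$, and $\alpha>0$. $K_{ass'}=\delta_{ss'}-\gamma P_{ass'}$, $\tilde u_s=\sum_a u_{sa}$ (and $\tilde u^*_s=\sum_a u^*_{sa}$), and $E(v,u)=\frac{\alpha}{2}\sum_s v_s^2+\sum_{s,a}u_{sa}(r_{sa}-\sum_{s'}K_{ass'}v_{s'})-\tau\sum_{s,a}u_{sa}\log(u_{sa}/\tilde u_s)$. This min-max problem has a unique saddle point $(v^*,u^* )$ with $u^*_{sa}>0$. *)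

From mathcomp Require Import all_boot all_order all_algebra.
From mathcomp Require Import reals exp.
Set Implicit Arguments. Unset Strict Implicit. Unset Printing Implicit Defensive.
Import Order.TTheory GRing.Theory Num.Theory.
Local Open Scope ring_scope.

Section MDP.
Variables (R : realType) (S A : finType).

Definition stochastic (P : A -> S -> S -> R) : Prop :=
  (forall a s s', 0 <= P a s s') /\ (forall a s, \sum_(s' : S) P a s s' = 1).

Definition Kmat (gamma : R) (P : A -> S -> S -> R) (a : A) (s s' : S) : R :=
  (s == s')%:R - gamma * P a s s'.

Definition utilde (u : S -> A -> R) (s : S) : R := \sum_(a : A) u s a.

Definition posu (u : S -> A -> R) : Prop := forall s a, 0 < u s a.

Definition Efun (gamma tau alpha : R) (P : A -> S -> S -> R) (r : S -> A -> R)
  (v : S -> R) (u : S -> A -> R) : R :=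
  alpha / 2 * \sum_(s : S) v s ^+ 2
  + \sum_(s : S) \sum_(a : A)
      u s a * (r s a - \sum_(s' : S) Kmat gamma P a s s' * v s')
  - tau * \sum_(s : S) \sum_(a : A) u s a * ln (u s a / utilde u s).

Definition saddle_point (gamma tau alpha : R) (P : A -> S -> S -> R)
  (r : S -> A -> R) (vs : S -> R) (us : S -> A -> R) : Prop :=
  posu us /\
  (forall u, posu u -> Efun gamma tau alpha P r vs u <= Efun gamma tau alpha P r vs us) /\
  (forall v, Efun gamma tau alpha P r vs us <= Efun gamma tau alpha P r v us).

Definition Lc (tau alpha c : R) (vs : S -> R) (us : S -> A -> R)
  (v : S -> R) (u : S -> A -> R) : R :=
  alpha / 2 * \sum_(s : S) `|v s - vs s| ^+ 2
  + tau * (\sum_(s : S) \sum_(a : A)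
             (us s a * ln (us s a / u s a) + u s a - us s a)
           + c / (1 - c) * \sum_(s : S)
             (utilde us s * ln (utilde us s / utilde u s)
              + utilde u s - utilde us s)).

End MDP.

From mathcomp Require Import all_boot all_order all_algebra.
From mathcomp Require Import interval_inference reals exp convex.
From mathcomp Require Import ring lra.
From Stdlib Require Import FunctionalExtensionality Classical.
Import Order.TTheory GRing.Theory Num.Theory.
Local Open Scope ring_scope.
Set Implicit Arguments.
Unset Strict Implicit.

(* L_c is a nonnegative combination of the squared distance to v* and of two
   generalized Kullback-Leibler divergences sum_i p_i ln (p_i / q_i) + q_i - p_i:
   one between u* and u, one between their marginals ũ* and ũ.  Each summand is
   convex in q because ln is concave, is nonnegative and vanishes only at q = p
   because ln z <= z - 1 with equality only at z = 1, and dominates q / 2 - p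
   because ln z <= z / 2; the last fact bounds u on sublevel sets, and the
   squared distance bounds v. *)

Lemma fun_neq_exists (T U : Type) (f g : T -> U) : f <> g -> exists x, f x <> g x.
Proof. by move=> fg; apply: not_all_ex_not => fg_eq; apply/fg/functional_extensionality. Qed.

Section ConvexCombination.
Variable R : realDomainType.
Implicit Types x y z t : R.

Lemma comb_gt0 x y t : 0 < x -> 0 < y -> 0 <= t <= 1 -> 0 < t * x + (1 - t) * y.
Proof. by move=> x0 y0 /andP[t0 t1]; have := convR_gt0 (Itv01 t0 t1) x0 y0; rewrite convRE. Qed.

Lemma sqr_normB_convex x y z t : 0 <= t <= 1 ->
  `|t * x + (1 - t) * y - z| ^+ 2 <= t * `|x - z| ^+ 2 + (1 - t) * `|y - z| ^+ 2.
Proof.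
move=> /andP[t0 t1]; rewrite !real_normK ?num_real //.
have t1' : 0 <= 1 - t by rewrite subr_ge0.
have := mulr_ge0 (mulr_ge0 t0 t1') (sqr_ge0 (x - y)); lra.
Qed.

End ConvexCombination.

Section FiniteSums.
Variables (R : realDomainType) (I : finType).
Implicit Types (F G H x y : I -> R) (t : R).

Lemma ler_term_sum F i : (forall j, 0 <= F j) -> F i <= \sum_j F j.
Proof. by move=> F0; rewrite (bigD1 i) //= lerDl sumr_ge0. Qed.

Lemma ler_sum_comb F G H t : (forall i, F i <= t * G i + (1 - t) * H i) ->
  \sum_i F i <= t * \sum_i G i + (1 - t) * \sum_i H i.
Proof. by move=> FGH; rewrite !mulr_sumr -big_split; apply: ler_sum => i _. Qed.

Lemma finite_ub F : exists B, forall i, F i <= B.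
Proof.
exists (\sum_i `|F i|) => i.
exact: (le_trans (ler_norm _) (ler_term_sum i (fun j => normr_ge0 (F j)))).
Qed.

Definition sqdist x y : R := \sum_i `|x i - y i| ^+ 2.

Lemma sqdistxx x : sqdist x x = 0.
Proof. by rewrite /sqdist big1 // => i _; rewrite subrr normr0 expr0n. Qed.

Lemma le_sqdist x y i : `|x i - y i| ^+ 2 <= sqdist x y.
Proof. by apply: (ler_term_sum (F := fun j => `|x j - y j| ^+ 2)) => j; exact: sqr_ge0. Qed.

Lemma sqdist_ge0 x y : 0 <= sqdist x y.
Proof. by apply: sumr_ge0 => i _; exact: sqr_ge0. Qed.

Lemma sqdist_gt0 x y i : x i != y i -> 0 < sqdist x y.
Proof.
move=> xy; apply: lt_le_trans (le_sqdist x y i).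
by rewrite exprn_gt0 // normr_gt0 subr_eq0.
Qed.

Lemma sqdist_convex x x1 x2 y t : 0 <= t <= 1 ->
  (forall i, x i = t * x1 i + (1 - t) * x2 i) ->
  sqdist x y <= t * sqdist x1 y + (1 - t) * sqdist x2 y.
Proof. by move=> t01 xE; apply: ler_sum_comb => i; rewrite xE sqr_normB_convex. Qed.

End FiniteSums.

Section LnFacts.
Variable R : realType.
Implicit Types x y t : R.

Lemma ln_le_subr1 x : 0 < x -> ln x <= x - 1.
Proof. by move=> x0; have := @le_ln1Dx R (x - 1); rewrite subrKC; apply; lra. Qed.

Lemma ln_lt_subr1 x : 0 < x -> x != 1 -> ln x < x - 1.
Proof.
move=> x0 x1; rewrite -ltr_expR lnK ?posrE //.
by have := @expR_gt1Dx R (x - 1); rewrite subrKC; apply; rewrite subr_eq0.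
Qed.

Lemma ln_le_half x : 0 < x -> ln x <= x / 2.
Proof.
move=> x0; have x2 : x = x / 2 * 2 by rewrite divfK ?pnatr_eq0.
rewrite {1}x2 lnM ?posrE ?divr_gt0 //.
have := @ln_le_subr1 (x / 2) (divr_gt0 x0 (ltr0Sn R 1)).
have := @ln_le_subr1 2 (ltr0Sn R 1); lra.
Qed.

Lemma ln_concave x y t : 0 < x -> 0 < y -> 0 <= t <= 1 ->
  t * ln x + (1 - t) * ln y <= ln (t * x + (1 - t) * y).
Proof. by move=> x0 y0 /andP[t0 t1]; have := concave_ln (Itv01 t0 t1) x0 y0; rewrite !convRE. Qed.

End LnFacts.

Section KullbackLeibler.
Variable R : realType.
Implicit Types p q t : R.

Definition kldiv p q : R := p * ln (p / q) + q - p.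

Lemma kldivxx p : kldiv p p = 0.
Proof.
rewrite /kldiv; have [->|p0] := eqVneq p 0; first by rewrite mul0r addr0 subrr.
by rewrite divff // ln1 mulr0 add0r subrr.
Qed.

Lemma kldivE p q : 0 < p -> 0 < q -> kldiv p q = p * (q / p - 1 - ln (q / p)).
Proof.
move=> p0 q0; rewrite /kldiv -[p / q]invf_div lnV ?posrE ?divr_gt0 //.
by field; rewrite gt_eqF.
Qed.

Lemma kldiv_ge0 p q : 0 < p -> 0 < q -> 0 <= kldiv p q.
Proof.
move=> p0 q0; rewrite kldivE // pmulr_rge0 // subr_ge0.
by rewrite ln_le_subr1 ?divr_gt0.
Qed.

Lemma kldiv_gt0 p q : 0 < p -> 0 < q -> q != p -> 0 < kldiv p q.
Proof.
move=> p0 q0 qp; rewrite kldivE // pmulr_rgt0 // subr_gt0 ln_lt_subr1 ?divr_gt0 //.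
by apply: contra qp => /eqP qp1; rewrite -[q](divfK (lt0r_neq0 p0)) qp1 mul1r.
Qed.

Lemma half_sub_le_kldiv p q : 0 < p -> 0 < q -> q / 2 - p <= kldiv p q.
Proof.
move=> p0 q0; rewrite kldivE //.
have := ler_wpM2l (ltW p0) (ln_le_half (divr_gt0 q0 p0)).
have -> : p * (q / p / 2) = q / 2 by field; rewrite gt_eqF.
have -> : p * (q / p - 1 - ln (q / p)) = q - p - p * ln (q / p) by field; rewrite gt_eqF.
lra.
Qed.

Lemma kldiv_convex p q1 q2 t : 0 < p -> 0 < q1 -> 0 < q2 -> 0 <= t <= 1 ->
  kldiv p (t * q1 + (1 - t) * q2) <= t * kldiv p q1 + (1 - t) * kldiv p q2.
Proof.
move=> p0 q10 q20 t01; have q0 := comb_gt0 q10 q20 t01.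
have := ler_wpM2l (ltW p0) (ln_concave q10 q20 t01).
by rewrite /kldiv !ln_div ?posrE //; lra.
Qed.

End KullbackLeibler.

Section KLSum.
Variables (R : realType) (I : finType).
Implicit Types (p q : I -> R) (t : R).

Definition klsum p q : R := \sum_i kldiv (p i) (q i).

Lemma klsumxx p : klsum p p = 0.
Proof. by rewrite /klsum big1 // => i _; rewrite kldivxx. Qed.

Section PositiveReference.
Variable p : I -> R.
Hypothesis p_gt0 : forall i, 0 < p i.

Lemma le_klsum q i : (forall j, 0 < q j) -> kldiv (p i) (q i) <= klsum p q.
Proof.
move=> q_gt0; apply: (ler_term_sum (F := fun j => kldiv (p j) (q j))) => j.
exact: kldiv_ge0.
Qed.

Lemma klsum_ge0 q : (forall i, 0 < q i) -> 0 <= klsum p q.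
Proof. by move=> q_gt0; apply: sumr_ge0 => i _; exact: kldiv_ge0. Qed.

Lemma klsum_gt0 q i : (forall j, 0 < q j) -> q i != p i -> 0 < klsum p q.
Proof. by move=> q_gt0 qp; apply: lt_le_trans (le_klsum i q_gt0); exact: kldiv_gt0. Qed.

Lemma klsum_convex q q1 q2 t : (forall i, 0 < q1 i) -> (forall i, 0 < q2 i) ->
  0 <= t <= 1 -> (forall i, q i = t * q1 i + (1 - t) * q2 i) ->
  klsum p q <= t * klsum p q1 + (1 - t) * klsum p q2.
Proof. by move=> q10 q20 t01 qE; apply: ler_sum_comb => i; rewrite qE kldiv_convex. Qed.

End PositiveReference.

End KLSum.

Section Marginals.
Variables (R : realType) (S A : finType).
Implicit Types u : S -> A -> R.

Lemma posu_uncurry u : posu u -> forall p, 0 < uncurry u p.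
Proof. by move=> u_gt0 [s a]; exact: u_gt0. Qed.

Lemma klsum_uncurry u' u :
  klsum (uncurry u') (uncurry u) = \sum_s \sum_a kldiv (u' s a) (u s a).
Proof. by rewrite /klsum pair_bigA; apply: eq_bigr => -[]. Qed.

Lemma utilde_comb u u1 u2 t :
  (forall s a, u s a = t * u1 s a + (1 - t) * u2 s a) ->
  forall s, utilde u s = t * utilde u1 s + (1 - t) * utilde u2 s.
Proof. by move=> uE s; rewrite /utilde (eq_bigr _ (fun a _ => uE s a)) big_split /= -!mulr_sumr. Qed.

Lemma utilde_gt0_or_eq0 :
  (forall u, posu u -> forall s, 0 < utilde u s) \/ (forall u s, utilde u s = 0).
Proof.
have [a _|A0] := pickP (@predT A).
  left=> u u_gt0 s; apply: (lt_le_trans (u_gt0 s a)).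
  by apply: (ler_term_sum (F := u s)) => b; exact: ltW.
by right=> u s; rewrite /utilde big1 // => a _; move: (A0 a).
Qed.

Lemma klsum_utilde_ge0 u' u : posu u' -> posu u -> 0 <= klsum (utilde u') (utilde u).
Proof.
case: utilde_gt0_or_eq0 => [ut_gt0|ut0] u'_gt0 u_gt0.
  exact: (klsum_ge0 (ut_gt0 _ u'_gt0) (ut_gt0 _ u_gt0)).
by rewrite /klsum big1 // => s _; rewrite !ut0 kldivxx.
Qed.

Lemma klsum_utilde_convex u' u u1 u2 t :
  posu u' -> posu u1 -> posu u2 -> 0 <= t <= 1 ->
  (forall s a, u s a = t * u1 s a + (1 - t) * u2 s a) ->
  klsum (utilde u') (utilde u)
    <= t * klsum (utilde u') (utilde u1) + (1 - t) * klsum (utilde u') (utilde u2).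
Proof.
move=> u'_gt0 u1_gt0 u2_gt0 t01 uE; case: utilde_gt0_or_eq0 => [ut_gt0|ut0].
  exact: (klsum_convex (ut_gt0 _ u'_gt0) (ut_gt0 _ u1_gt0) (ut_gt0 _ u2_gt0) t01
    (utilde_comb uE)).
by rewrite /klsum !big1 ?(mulr0, addr0) // => s _; rewrite !ut0 kldivxx.
Qed.

Lemma LcE (tau alpha c : R) (vs : S -> R) u' v u :
  Lc tau alpha c vs u' v u = alpha / 2 * sqdist v vs
    + tau * (klsum (uncurry u') (uncurry u) + c / (1 - c) * klsum (utilde u') (utilde u)).
Proof. by rewrite klsum_uncurry. Qed.

End Marginals.

Section Lyapunov.
Variables (R : realType) (S A : finType) (tau alpha c : R).
Variables (vs : S -> R) (us : S -> A -> R).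
Hypotheses (tau_gt0 : 0 < tau) (alpha_gt0 : 0 < alpha).
Hypotheses (c_ge0 : 0 <= c) (c_lt1 : c < 1) (us_gt0 : posu us).

Local Notation L := (Lc tau alpha c vs us).

Let kappa_ge0 : 0 <= c / (1 - c).
Proof. by rewrite divr_ge0 // subr_ge0 ltW. Qed.

Let halfalpha_gt0 : 0 < alpha / 2.
Proof. by rewrite divr_gt0. Qed.

Lemma Lcxx : L vs us = 0.
Proof. by rewrite LcE sqdistxx !klsumxx !(mulr0, addr0). Qed.

Lemma Lc_convex v1 v2 u1 u2 t : posu u1 -> posu u2 -> 0 <= t <= 1 ->
  L (fun s => t * v1 s + (1 - t) * v2 s) (fun s a => t * u1 s a + (1 - t) * u2 s a)
    <= t * L v1 u1 + (1 - t) * L v2 u2.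
Proof.
move=> u1_gt0 u2_gt0 t01; rewrite !LcE.
have hV : sqdist (fun s => t * v1 s + (1 - t) * v2 s) vs
    <= t * sqdist v1 vs + (1 - t) * sqdist v2 vs by exact: sqdist_convex.
have hU : klsum (uncurry us) (uncurry (fun s a => t * u1 s a + (1 - t) * u2 s a))
    <= t * klsum (uncurry us) (uncurry u1) + (1 - t) * klsum (uncurry us) (uncurry u2).
  by apply: (klsum_convex (posu_uncurry us_gt0) (posu_uncurry u1_gt0)
                          (posu_uncurry u2_gt0) t01) => -[].
have hW := klsum_utilde_convex us_gt0 u1_gt0 u2_gt0 t01 (fun s a => erefl).
have := ler_wpM2l (ltW halfalpha_gt0) hV.
have := ler_wpM2l (ltW tau_gt0) hU.
have := ler_wpM2l (mulr_ge0 (ltW tau_gt0) kappa_ge0) hW.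
lra.
Qed.

Lemma sqdist_le_Lc v u : posu u -> alpha / 2 * sqdist v vs <= L v u.
Proof.
move=> u_gt0; rewrite LcE lerDl; apply: mulr_ge0; first exact: ltW.
apply: addr_ge0; first exact: (klsum_ge0 (posu_uncurry us_gt0) (posu_uncurry u_gt0)).
exact: (mulr_ge0 kappa_ge0 (klsum_utilde_ge0 us_gt0 u_gt0)).
Qed.

Lemma klsum_le_Lc v u : posu u -> tau * klsum (uncurry us) (uncurry u) <= L v u.
Proof.
move=> u_gt0; rewrite LcE.
have := mulr_ge0 (ltW halfalpha_gt0) (sqdist_ge0 v vs).
have := mulr_ge0 (ltW tau_gt0) (mulr_ge0 kappa_ge0 (klsum_utilde_ge0 us_gt0 u_gt0)).
lra.
Qed.

Lemma Lc_gt0 v u : posu u -> v <> vs \/ u <> us -> 0 < L v u.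
Proof.
move=> u_gt0 [v_neq|u_neq].
  have [s /eqP vs_neq] := fun_neq_exists v_neq.
  exact: (lt_le_trans (mulr_gt0 halfalpha_gt0 (sqdist_gt0 vs_neq)) (sqdist_le_Lc v u_gt0)).
have [s u_neq_s] := fun_neq_exists u_neq.
have [a /eqP us_neq] := fun_neq_exists u_neq_s.
have U_gt0 : 0 < klsum (uncurry us) (uncurry u).
  exact: (klsum_gt0 (i := (s, a)) (posu_uncurry us_gt0) (posu_uncurry u_gt0) us_neq).
exact: (lt_le_trans (mulr_gt0 tau_gt0 U_gt0) (klsum_le_Lc v u_gt0)).
Qed.

Lemma Lc_sublevel_bounded M : exists B, forall v u, posu u -> L v u <= M ->
  (forall s, `|v s| <= B) /\ (forall s a, `|u s a| <= B).
Proof.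
have [Bv Bv_ub] := finite_ub (fun s => `|vs s| + 1 + 2 * M / alpha).
have [Bu Bu_ub] := finite_ub (fun p => 2 * (M / tau + uncurry us p)).
exists (Num.max Bv Bu) => v u u_gt0 LM; split => [s|s a]; rewrite le_max; apply/orP.
  left; apply: le_trans (Bv_ub s).
  have dist_le : `|v s - vs s| ^+ 2 <= 2 * M / alpha.
    rewrite ler_pdivlMr // mulrC.
    have := ler_wpM2l (ltW alpha_gt0) (le_sqdist v vs s).
    have := le_trans (sqdist_le_Lc v u_gt0) LM; lra.
  have := ler_normD (vs s) (v s - vs s); rewrite subrKC.
  have := sqr_ge0 (`|v s - vs s| - 1); have := sqr_ge0 `|v s - vs s|; lra.
right; apply: le_trans (Bu_ub (s, a)); rewrite gtr0_norm ?u_gt0 //=.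
have kl_le : klsum (uncurry us) (uncurry u) <= M / tau.
  by rewrite ler_pdivlMr // mulrC; exact: (le_trans (klsum_le_Lc v u_gt0) LM).
have := half_sub_le_kldiv (us_gt0 s a) (u_gt0 s a).
have := le_klsum (posu_uncurry us_gt0) (s, a) (posu_uncurry u_gt0); rewrite /=.
lra.
Qed.

End Lyapunov.

Unset Implicit Arguments.

Theorem lemma3p1 (R : realType) (S A : finType)
  (P : A -> S -> S -> R) (r : S -> A -> R) (gamma tau alpha c : R)
  (vs : S -> R) (us : S -> A -> R) :
  stochastic P ->
  (forall s a, 0 <= r s a) ->
  0 < gamma < 1 -> 0 < tau -> 0 < alpha ->
  0 < c < 1 ->
  saddle_point gamma tau alpha P r vs us ->
  (* convexity of L_c on R^S x (R_{>0})^{S x A} *)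
  (forall (v1 v2 : S -> R) (u1 u2 : S -> A -> R) (t : R),
      posu u1 -> posu u2 -> 0 <= t <= 1 ->
      Lc tau alpha c vs us (fun s => t * v1 s + (1 - t) * v2 s)
                           (fun s a => t * u1 s a + (1 - t) * u2 s a)
      <= t * Lc tau alpha c vs us v1 u1 + (1 - t) * Lc tau alpha c vs us v2 u2)
  /\
  (* unique minimum at (vs, us), with value 0 *)
  Lc tau alpha c vs us vs us = 0 /\
  (forall (v : S -> R) (u : S -> A -> R), posu u ->
      (v <> vs \/ u <> us) -> Lc tau alpha c vs us vs us < Lc tau alpha c vs us v u)
  /\
  (* bounded sublevel sets *)
  (forall M : R, exists B : R, forall (v : S -> R) (u : S -> A -> R), posu u ->
      Lc tau alpha c vs us v u <= M ->
      (forall s, `|v s| <= B) /\ (forall s a, `|u s a| <= B)).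
Proof.
move=> _ _ _ tau_gt0 alpha_gt0 /andP[c_gt0 c_lt1] [us_gt0 _].
have c_ge0 := ltW c_gt0.
split; first exact: Lc_convex.
split; first exact: Lcxx.
split; first by move=> v u u_gt0 vu_neq; rewrite Lcxx; exact: Lc_gt0.
exact: Lc_sublevel_bounded.
Qed.
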